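(* Let $\Gamma=\{b_1q_1\overline{b_1'}=0,\dots,b_mq_m\overline{b_m'}=0\}\cup\{c_1\le c_1',\dots,c_n\le c_n'\}$ be a finite set of assumptions with $q_i\in\Sigma$ and all $b_i,b_i',c_j,c_j'$ Boolean expressions. Then for all KAT expressions $e_1,e_2$: the equation $e_1=e_2$ is derivable from the KAT axioms together with the hypotheses in $\Gamma$ (i.e. $\mathsf{KAT},\Gamma\vdash e_1=e_2$, meaning the Horn formula $\bigwedge\Gamma\to e_1=e_2$ holds in every Kleene algebra with tests under every interpretation of the action and test symbols) if and only if $\mathsf{GS}^\Gamma(e_1)=\mathsf{GS}^\Gamma(e_2)$.
   Context: Let $\Sigma=\{p_1,\dots,p_k\}$ ($k\ge1$) be a finite set of action symbols and $T=\{t_1,\dots,t_l\}$ ($l\ge1$) a finite set of test symbols. Boolean expressions: $b::=0\mid 1\mid t\mid \overline{b}\mid b_1+b_2\mid b_1 b_2$; KAT expressions (syntactic terms): $e::=p\in\Sigma\mid b\mid e_1+e_2\mid e_1e_2\mid e^*$. A Kleene algebra with tests is a structure $(K,B,+,\cdot,^*,0,1,\bar{\ })$ where $(K,+,\cdot,^*,0,1)$ is a Kleene algebra, $B\subseteq K$, $(B,+,\cdot,\bar{\ },0,1)$ is a Boolean algebra and a subalgebra of $(K,+,\cdot,0,1)$; $x\le y$ means $x+y=y$; test symbols are interpreted in $B$. $\mathsf{At}$ is the set of atoms (words $b_1\cdots b_l$ with $b_i\in\{t_i,\overline{t_i}\}$), identified with truth assignments to $T$; $\alpha\le b$ means $b$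 is true under $\alpha$. Guarded strings: $\mathsf{GS}=(\mathsf{At}\cdot\Sigma)^*\cdot\mathsf{At}$. The fusion product $xy$ is defined only when the last atom of $x$ equals the first atom of $y$, and is the concatenation with one copy of that atom omitted; $X\diamond Y=\{xy\mid x\in X,y\in Y,xy\text{ defined}\}$, $X^{n+1}=X\diamond X^n$. $\mathsf{At}^\Gamma=\{\alpha\in\mathsf{At}\mid \alpha\le c\Rightarrow\alpha\le c'\text{ for all }(c\le c')\in\Gamma\}$. Guarded strings modulo $\Gamma$: $\mathsf{GS}^\Gamma(p)=\{\alpha p\beta\mid\alpha,\beta\in\mathsf{At}^\Gamma\text{ and for every assumption }bp\overline{b'}=0\text{ in }\Gamma\text{ (with this same }p),\ \alpha\le b\Rightarrow\beta\le b'\}$; $\mathsf{GS}^\Gamma(b)=\{\alpha\in\mathsf{At}^\Gamma\mid\alpha\le b\}$; $\mathsf{GS}^\Gamma(e_1+e_2)=\mathsf{GS}^\Gamma(e_1)\cup\mathsf{GS}^\Gamma(e_2)$; $\mathsf{GS}^\Gamma(e_1e_2)=\mathsf{GS}^\Gamma(e_1)\diamond\mathsf{GS}^\Gamma(e_2)$; $\mathsf{GS}^\Gamma(e^* )=\bigcup_{n\ge0}\mathsf{GS}^\Gamma(e)^n$ with $X^0=\mathsf{At}^\Gamma$. *)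

From mathcomp Require Import all_boot.
From Stdlib Require List.
Set Implicit Arguments. Unset Strict Implicit. Unset Printing Implicit Defensive.

Record KAT := MkKAT {
  kcar :> Type;
  kadd : kcar -> kcar -> kcar;
  kmul : kcar -> kcar -> kcar;
  kstar : kcar -> kcar;
  kzero : kcar;
  kone : kcar;
  ktest : kcar -> Prop;          (* membership in the Boolean subalgebra B *)
  kneg : kcar -> kcar;           (* complement; only meaningful on B *)
  kaddA : forall x y z, kadd x (kadd y z) = kadd (kadd x y) z;
  kaddC : forall x y, kadd x y = kadd y x;
  kadd0 : forall x, kadd x kzero = x;
  kaddI : forall x, kadd x x = x;
  kmulA : forall x y z, kmul x (kmul y z) = kmul (kmul x y) z;
  kmul1l : forall x, kmul kone x = x;
  kmul1r : forall x, kmul x kone = x;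
  kmulDl : forall x y z, kmul x (kadd y z) = kadd (kmul x y) (kmul x z);
  kmulDr : forall x y z, kmul (kadd x y) z = kadd (kmul x z) (kmul y z);
  kmul0l : forall x, kmul kzero x = kzero;
  kmul0r : forall x, kmul x kzero = kzero;
  (* star axioms, with x <= y := x + y = y *)
  kstar_unfoldl : forall x, kadd (kadd kone (kmul x (kstar x))) (kstar x) = kstar x;
  kstar_unfoldr : forall x, kadd (kadd kone (kmul (kstar x) x)) (kstar x) = kstar x;
  kstar_indl : forall a b x, kadd (kadd b (kmul a x)) x = x ->
                             kadd (kmul (kstar a) b) x = x;
  kstar_indr : forall a b x, kadd (kadd b (kmul x a)) x = x ->
                             kadd (kmul b (kstar a)) x = x;
  ktest0 : ktest kzero;
  ktest1 : ktest kone;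
  ktestD : forall b c, ktest b -> ktest c -> ktest (kadd b c);
  ktestM : forall b c, ktest b -> ktest c -> ktest (kmul b c);
  ktestN : forall b, ktest b -> ktest (kneg b);
  (* (B,+,.,neg,0,1) is a Boolean algebra (Huntington's axioms; the ones
     already implied by the semiring axioms are not repeated) *)
  kBmulC : forall b c, ktest b -> ktest c -> kmul b c = kmul c b;
  kBaddDr : forall b c d, ktest b -> ktest c -> ktest d ->
                kadd b (kmul c d) = kmul (kadd b c) (kadd b d);
  kBcompl1 : forall b, ktest b -> kadd b (kneg b) = kone;
  kBcompl0 : forall b, ktest b -> kmul b (kneg b) = kzero
}.

Definition kle (K : KAT) (x y : K) := kadd x y = y.

(* ---------- Syntax: Sigma = 'I_k, T = 'I_l ---------- *)
Inductive bexp (l : nat) : Type :=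
| BZero | BOne | BTest of 'I_l | BNeg of bexp l
| BAdd of bexp l & bexp l | BMul of bexp l & bexp l.

Inductive kexp (k l : nat) : Type :=
| KAct of 'I_k
| KTest of bexp l
| KAdd of kexp k l & kexp k l
| KMul of kexp k l & kexp k l
| KStar of kexp k l.

Arguments BZero {l}. Arguments BOne {l}.

Fixpoint beval (K : KAT) l (J : 'I_l -> K) (b : bexp l) : K :=
  match b with
  | BZero => kzero K
  | BOne => kone K
  | BTest t => J t
  | BNeg b => kneg (beval J b)
  | BAdd b1 b2 => kadd (beval J b1) (beval J b2)
  | BMul b1 b2 => kmul (beval J b1) (beval J b2)
  end.

Fixpoint keval (K : KAT) k l (I : 'I_k -> K) (J : 'I_l -> K) (e : kexp k l) : K :=
  match e with
  | KAct p => I p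
  | KTest b => beval J b
  | KAdd e1 e2 => kadd (keval I J e1) (keval I J e2)
  | KMul e1 e2 => kmul (keval I J e1) (keval I J e2)
  | KStar e => kstar (keval I J e)
  end.

(* Gamma = action assumptions  b q ~b' = 0  (triples (b, q, b'))
         + test assumptions    c <= c'      (pairs (c, c')). *)
Definition Gamma_holds (K : KAT) k l (I : 'I_k -> K) (J : 'I_l -> K)
  (Ga : seq (bexp l * 'I_k * bexp l)) (Gt : seq (bexp l * bexp l)) : Prop :=
  (forall a, List.In a Ga ->
     kmul (kmul (beval J a.1.1) (I a.1.2)) (kneg (beval J a.2)) = kzero K) /\
  (forall c, List.In c Gt -> kle (beval J c.1) (beval J c.2)).

Definition KAT_derivable k l (Ga : seq (bexp l * 'I_k * bexp l))
  (Gt : seq (bexp l * bexp l)) (e1 e2 : kexp k l) : Prop :=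
  forall (K : KAT) (I : 'I_k -> K) (J : 'I_l -> K),
    (forall t, ktest (J t)) ->
    Gamma_holds I J Ga Gt -> keval I J e1 = keval I J e2.

Definition atom (l : nat) := {ffun 'I_l -> bool}.

Fixpoint bsat l (alpha : atom l) (b : bexp l) : bool :=
  match b with
  | BZero => false
  | BOne => true
  | BTest t => alpha t
  | BNeg b => ~~ bsat alpha b
  | BAdd b1 b2 => bsat alpha b1 || bsat alpha b2
  | BMul b1 b2 => bsat alpha b1 && bsat alpha b2
  end.

(* a guarded string alpha_0 p_1 alpha_1 ... p_n alpha_n is represented as
   (alpha_0, [:: (p_1, alpha_1); ...; (p_n, alpha_n)]) *)
Definition gstring k l := (atom l * seq ('I_k * atom l))%type.

Definition gfirst k l (x : gstring k l) : atom l := x.1.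
Definition glast k l (x : gstring k l) : atom l := last x.1 (map snd x.2).

Definition gset k l := gstring k l -> Prop.

Definition gfuse k l (X Y : gset k l) : gset k l :=
  fun z => exists x y, X x /\ Y y /\ glast x = gfirst y /\ z = (x.1, x.2 ++ y.2).

Definition AtG l (Gt : seq (bexp l * bexp l)) (alpha : atom l) : Prop :=
  forall c, List.In c Gt -> bsat alpha c.1 -> bsat alpha c.2.

Definition AtG_set k l (Gt : seq (bexp l * bexp l)) : gset k l :=
  fun z => z.2 = [::] /\ AtG Gt z.1.

Fixpoint gpow k l (Gt : seq (bexp l * bexp l)) (X : gset k l) (n : nat) : gset k l :=
  match n with
  | 0 => @AtG_set k l Gt
  | n.+1 => gfuse X (gpow Gt X n)
  end.

Fixpoint GSG k l (Ga : seq (bexp l * 'I_k * bexp l)) (Gt : seq (bexp l * bexp l))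
  (e : kexp k l) : gset k l :=
  match e with
  | KAct p => fun z => exists alpha beta,
       z = (alpha, [:: (p, beta)]) /\ AtG Gt alpha /\ AtG Gt beta /\
       (forall a, List.In a Ga -> a.1.2 = p -> bsat alpha a.1.1 -> bsat beta a.2)
  | KTest b => fun z => z.2 = [::] /\ AtG Gt z.1 /\ bsat z.1 b
  | KAdd e1 e2 => fun z => GSG Ga Gt e1 z \/ GSG Ga Gt e2 z
  | KMul e1 e2 => gfuse (GSG Ga Gt e1) (GSG Ga Gt e2)
  | KStar e => fun z => exists n, gpow Gt (GSG Ga Gt e) n z
  end.

From mathcomp Require Import all_boot.
From HB Require Import structures.
From Stdlib Require Import Classical ClassicalEpsilon FunctionalExtensionality.
From Stdlib Require Import PropExtensionality ProofIrrelevance.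
Set Implicit Arguments. Unset Strict Implicit. Unset Printing Implicit Defensive.

(* The sets of guarded strings all of whose atoms lie in
   At^Gamma, with union, fusion product, iterated fusion, the empty set, At^Gamma
   and relative complement inside At^Gamma, form a KAT [GSKAT].  Interpreting
   p as GS^Gamma(p) and t as the atoms satisfying t, every expression e denotes
   GS^Gamma(e) and the hypotheses of Gamma hold; so a derivable equation
   e1 = e2 forces GS^Gamma(e1) = GS^Gamma(e2).

   We show that GS^Gamma(e) included in GS^Gamma(f) implies e <= f in K:
   - 1 is the sum of all atoms, atoms outside At^Gamma are 0, and an atom
     alpha followed by q and an atom beta violating some b q ~b' = 0 is 0;
   - Antimirov derivatives of f yield a finite deterministic automaton (on
     sets of derivatives) accepting every guarded string of f;
   - the Kleene/McNaughton-Yamada star of its transition matrix gives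
     elements z q with 1 <= z q0 and z q . alpha . p <= z (delta q alpha p),
     and z q . y q <= y q0 for the vector y of derivative values;
   - by induction on e, z q . alpha . e is bounded by the sum of z q' . beta
     over the runs q -> q' of the guarded strings alpha...beta of e. *)

Infix "⊕" := kadd (at level 50, left associativity).
Infix "⊗" := kmul (at level 40, left associativity).
Notation "x ≦ y" := (kle x y) (at level 70, no associativity).

Section KleeneOrder.
Variable K : KAT.
Implicit Types x y z a b c : K.

Lemma le_refl x : x ≦ x. Proof. exact: kaddI. Qed.
Lemma le_trans x y z : x ≦ y -> y ≦ z -> x ≦ z.
Proof. rewrite /kle => H1 H2; by rewrite -H2 kaddA H1. Qed.
Lemma le_antisym x y : x ≦ y -> y ≦ x -> x = y.
Proof. rewrite /kle => H1 H2; by rewrite -H1 kaddC H2. Qed.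
Lemma le_addl x y : x ≦ x ⊕ y. Proof. by rewrite /kle kaddA kaddI. Qed.
Lemma le_addr x y : y ≦ x ⊕ y. Proof. by rewrite kaddC; apply: le_addl. Qed.
Lemma add_le x y z : x ≦ z -> y ≦ z -> x ⊕ y ≦ z.
Proof. rewrite /kle => H1 H2; by rewrite -kaddA H2 H1. Qed.
Lemma add_leP x y z : x ⊕ y ≦ z -> x ≦ z /\ y ≦ z.
Proof. move=> H; split; apply: le_trans H; [apply: le_addl|apply: le_addr]. Qed.
Lemma le0 x : kzero K ≦ x. Proof. by rewrite /kle kaddC kadd0. Qed.
Lemma le0_eq x : x ≦ kzero K -> x = kzero K.
Proof. move=> H; apply: le_antisym H (le0 _). Qed.
Lemma mul_lel c x y : x ≦ y -> c ⊗ x ≦ c ⊗ y.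
Proof. rewrite /kle => H; by rewrite -kmulDl H. Qed.
Lemma mul_ler c x y : x ≦ y -> x ⊗ c ≦ y ⊗ c.
Proof. rewrite /kle => H; by rewrite -kmulDr H. Qed.
Lemma mul_le2 x y x' y' : x ≦ x' -> y ≦ y' -> x ⊗ y ≦ x' ⊗ y'.
Proof. move=> H1 H2; apply: le_trans (mul_ler _ H1) (mul_lel _ H2). Qed.

Lemma star_ind_l a b x : b ≦ x -> a ⊗ x ≦ x -> kstar a ⊗ b ≦ x.
Proof. move=> H1 H2; apply: kstar_indl; exact: add_le. Qed.
Lemma star_ind_r a b x : b ≦ x -> x ⊗ a ≦ x -> b ⊗ kstar a ≦ x.
Proof. move=> H1 H2; apply: kstar_indr; exact: add_le. Qed.
Lemma one_le_star a : kone K ≦ kstar a.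
Proof. by have [] := add_leP (kstar_unfoldl a). Qed.
Lemma mul_star_le a : a ⊗ kstar a ≦ kstar a.
Proof. by have [] := add_leP (kstar_unfoldl a). Qed.
Lemma star_mul_le a : kstar a ⊗ a ≦ kstar a.
Proof. by have [] := add_leP (kstar_unfoldr a). Qed.
Lemma star_star_le a : kstar a ⊗ kstar a ≦ kstar a.
Proof. apply: star_ind_l; [apply: le_refl | apply: mul_star_le]. Qed.

Lemma test_le1 x : ktest x -> x ≦ kone K.
Proof. move=> Hx; by rewrite /kle -(kBcompl1 Hx) kaddA kaddI. Qed.
Lemma test_idem x : ktest x -> x ⊗ x = x.
Proof.
move=> Hx; rewrite -{3}(kmul1r x) -(kBcompl1 Hx) kmulDl (kBcompl0 Hx); by rewrite kadd0.
Qed.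
Lemma test_mul_lel x y : ktest y -> x ⊗ y ≦ x.
Proof. move=> Hy; rewrite -{2}(kmul1r x); apply: mul_lel; exact: test_le1. Qed.
Lemma test_mul_ler x y : ktest x -> x ⊗ y ≦ y.
Proof. move=> Hx; rewrite -{2}(kmul1l y); apply: mul_ler; exact: test_le1. Qed.
Lemma test_le_eq x y : ktest x -> ktest y -> x ≦ y -> x = x ⊗ y.
Proof.
move=> Hx Hy Hxy; apply: le_antisym; last exact: test_mul_lel.
rewrite -{1}(test_idem Hx); exact: mul_lel.
Qed.
Lemma test_meet x y z : ktest z -> z ≦ x -> z ≦ y -> z ≦ x ⊗ y.
Proof. move=> Hz H1 H2; rewrite -(test_idem Hz); exact: mul_le2. Qed.

Lemma test_disjoint a x : ktest a -> ktest x -> a ≦ kneg x -> a ⊗ x = kzero K.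
Proof.
move=> Ha Hx H; rewrite (test_le_eq Ha (ktestN Hx) H) -kmulA (kBmulC (ktestN Hx) Hx).
by rewrite (kBcompl0 Hx) kmul0r.
Qed.
Lemma test_le_neg a x : ktest a -> ktest x -> a ⊗ x = kzero K -> a ≦ kneg x.
Proof.
move=> Ha Hx H.
have -> : a = a ⊗ kneg x by rewrite -{1}(kmul1r a) -(kBcompl1 Hx) kmulDl H kaddC kadd0.
exact: test_mul_ler.
Qed.
End KleeneOrder.

(* Finite sums over a finite type, filtered by an arbitrary (classically
   decided) proposition; the filters we need, such as "some guarded string of
   e leads from q to q'", are not decidable. *)
Definition propb (P : Prop) : bool := if excluded_middle_informative P then true else false.
Lemma propbE (P : Prop) : propb P <-> P.
Proof. rewrite /propb; case: excluded_middle_informative => //. Qed.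

Lemma In_enum (T : finType) (i : T) : List.In i (enum T).
Proof.
have : i \in enum T by rewrite mem_enum.
elim: (enum T) => [|j s IH] //=; rewrite in_cons => /orP [/eqP ->|/IH]; auto.
Qed.

Section Sums.
Variable K : KAT.
Variable T : finType.
Implicit Types (P Q : T -> Prop) (F G : T -> K).

Definition ksum P F : K :=
  foldr (fun i acc => (if propb (P i) then F i else kzero K) ⊕ acc) (kzero K) (enum T).

Lemma ksum_le P F x : (forall i, P i -> F i ≦ x) -> ksum P F ≦ x.
Proof.
rewrite /ksum; elim: (enum T) => [|i s IH] H /=; first exact: le0.
apply: add_le; last exact: IH.
by case: ifP => [/propbE /H|_] //; exact: le0.
Qed.

Lemma le_ksum P F i y : P i -> y ≦ F i -> y ≦ ksum P F.
Proof.
rewrite /ksum; elim: (enum T) (In_enum i) => [|j s IH] //= [->|Hi] Pi Hy.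
  have -> : propb (P i) by apply/propbE.
  exact: le_trans Hy (le_addl _ _).
exact: le_trans (IH Hi Pi Hy) (le_addr _ _).
Qed.

Lemma ksum_mono P Q F G :
  (forall i, P i -> exists2 j, Q j & F i ≦ G j) -> ksum P F ≦ ksum Q G.
Proof. move=> H; apply: ksum_le => i /H [j Qj Hj]; exact: le_ksum Qj Hj. Qed.

Lemma ksum_mull P F c : c ⊗ ksum P F = ksum P (fun i => c ⊗ F i).
Proof.
rewrite /ksum; elim: (enum T) => [|i s IH] /=; first exact: kmul0r.
by rewrite kmulDl IH; case: ifP => _ //; rewrite kmul0r.
Qed.
Lemma ksum_mulr P F c : ksum P F ⊗ c = ksum P (fun i => F i ⊗ c).
Proof.
rewrite /ksum; elim: (enum T) => [|i s IH] /=; first exact: kmul0l.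
by rewrite kmulDr IH; case: ifP => _ //; rewrite kmul0l.
Qed.
End Sums.

(* An atom alpha is interpreted as the product of the literals t or ~t it
   determines; it is a test, below exactly the Boolean expressions it
   satisfies and disjoint from the others, and the atoms sum up to (at least) 1. *)
Section Atoms.
Variable K : KAT.
Variable l : nat.
Variable J : 'I_l -> K.
Hypothesis hJ : forall t, ktest (J t).

Definition lit (al : atom l) (t : 'I_l) : K := if al t then J t else kneg (J t).
Definition lits (al : atom l) (s : seq 'I_l) : K :=
  foldr (fun t acc => lit al t ⊗ acc) (kone K) s.
Definition atomk (al : atom l) : K := lits al (enum 'I_l).

Lemma lit_test al t : ktest (lit al t).
Proof. rewrite /lit; case: (al t); [exact: hJ | exact: ktestN]. Qed.
Lemma lits_test al s : ktest (lits al s).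
Proof. elim: s => [|t s IH] /=; [exact: ktest1 | apply: ktestM => //; exact: lit_test]. Qed.
Lemma atomk_test al : ktest (atomk al). Proof. exact: lits_test. Qed.
Lemma atomk_idem al : atomk al ⊗ atomk al = atomk al.
Proof. apply: test_idem; exact: atomk_test. Qed.

Lemma atomk_le_lit al t : atomk al ≦ lit al t.
Proof.
rewrite /atomk; elim: (enum 'I_l) (mem_enum 'I_l t) => [|t' s IH] //=.
rewrite in_cons => /orP [/eqP <-|Hs].
  apply: test_mul_lel; exact: lits_test.
apply: le_trans (IH Hs); apply: test_mul_ler; exact: lit_test.
Qed.

Lemma beval_test b : ktest (beval J b).
Proof.
elim: b => [|||b IH|b1 IH1 b2 IH2|b1 IH1 b2 IH2] /=;
  [exact: ktest0|exact: ktest1|exact: hJ|exact: ktestN|exact: ktestD|exact: ktestM].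
Qed.

Lemma atom_decides al b :
  (bsat al b -> atomk al ≦ beval J b) /\ (~~ bsat al b -> atomk al ⊗ beval J b = kzero K).
Proof.
have Ha := atomk_test al.
elim: b => [|||b [IH1 IH2]|b1 [IH11 IH12] b2 [IH21 IH22]|b1 [IH11 IH12] b2 [IH21 IH22]] /=.
- by split=> // _; rewrite kmul0r.
- by split=> // _; apply: test_le1.
- move=> t; split=> H; have := atomk_le_lit al t; rewrite /lit ?H ?(negbTE H) //.
  exact: test_disjoint.
- have Hb := beval_test b; split=> H.
    apply: test_le_neg => //; exact: IH2.
  rewrite negbK in H.
  by rewrite (test_le_eq Ha Hb (IH1 H)) -kmulA (kBcompl0 Hb) kmul0r.
- split.
    case/orP=> H; [exact: le_trans (IH11 H) (le_addl _ _)|exact: le_trans (IH21 H) (le_addr _ _)].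
  by rewrite negb_or => /andP [H1 H2]; rewrite kmulDl IH12 // IH22 // kadd0.
- have Hb1 := beval_test b1; have Hb2 := beval_test b2; split.
    case/andP=> H1 H2; apply: test_meet => //; [exact: IH11|exact: IH21].
  rewrite negb_and => /orP [H|H]; first by rewrite kmulA IH12 // kmul0l.
  by rewrite (kBmulC Hb1 Hb2) kmulA IH22 // kmul0l.
Qed.

Lemma atom_sat al b : bsat al b -> atomk al ≦ beval J b.
Proof. by case: (atom_decides al b). Qed.
Lemma atom_unsat al b : ~~ bsat al b -> atomk al ⊗ beval J b = kzero K.
Proof. by case: (atom_decides al b). Qed.
Lemma atom_sat_eq al b : bsat al b -> atomk al = atomk al ⊗ beval J b.
Proof. move=> H; apply: test_le_eq; [exact: atomk_test|exact: beval_test|exact: atom_sat]. Qed.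
Lemma atom_unsat_eq al b : ~~ bsat al b -> atomk al = kneg (beval J b) ⊗ atomk al.
Proof.
move=> H; have Hb := beval_test b; have Ha := atomk_test al.
rewrite -(kBmulC Ha (ktestN Hb)); apply: test_le_eq => //; first exact: ktestN.
apply: test_le_neg => //; exact: atom_unsat.
Qed.

Definition upd (al : atom l) (t : 'I_l) (v : bool) : atom l :=
  [ffun i => if i == t then v else al i].

Lemma lits_upd al t v s : t \notin s -> lits (upd al t v) s = lits al s.
Proof.
elim: s => [|t' s IH] //=; rewrite in_cons negb_or => /andP [Ht Hs].
by rewrite IH // /lit /upd ffunE eq_sym (negbTE Ht).
Qed.

(* Expanding 1 = t + ~t one letter at a time. *)
Lemma sum_lits s : uniq s -> kone K ≦ ksum (fun _ : atom l => True) (fun al => lits al s).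
Proof.
elim: s => [|t s IH] /=.
  move=> _; apply: (@le_ksum _ _ _ _ [ffun=> false]) => //; exact: le_refl.
case/andP=> Hts Hu; have Ht := hJ t.
apply: le_trans (_ : (J t ⊕ kneg (J t)) ⊗ ksum (fun _ => True) (fun al => lits al s) ≦ _).
  rewrite kBcompl1 // kmul1l; exact: IH.
rewrite kmulDr !ksum_mull; apply: add_le; apply: ksum_le => al _.
- apply: (@le_ksum _ _ _ _ (upd al t true)) => //=.
  by rewrite lits_upd // /lit /upd ffunE eqxx; apply: le_refl.
- apply: (@le_ksum _ _ _ _ (upd al t false)) => //=.
  by rewrite lits_upd // /lit /upd ffunE eqxx; apply: le_refl.
Qed.

Lemma sum_atoms : kone K ≦ ksum (fun _ : atom l => True) atomk.
Proof. apply: sum_lits; exact: enum_uniq. Qed.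
End Atoms.

(* Concatenation of guarded strings, meaningful when glast x = gfirst y. *)
Notation gcat x y := (x.1, x.2 ++ y.2) (only parsing).

Section GuardedStrings.
Variables k l : nat.
Implicit Types (x y : gstring k l) (X Y Z : gset k l).
Variable Gt : seq (bexp l * bexp l).

Definition goodgs x := AtG Gt x.1 /\ forall pb, List.In pb x.2 -> AtG Gt pb.2.

Lemma glast_gcat x y : glast x = gfirst y -> glast (gcat x y : gstring k l) = glast y.
Proof. rewrite /glast /gfirst /= => H; by rewrite map_cat last_cat H. Qed.

Lemma glast_good x : goodgs x -> AtG Gt (glast x).
Proof.
case: x => a s [H1 H2]; rewrite /glast /=.
elim: s a H1 H2 => [|[p b] s IH] a H1 H2 //=.
apply: IH; first by apply: (H2 (p, b)); left.
by move=> pb Hp; apply: H2; right.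
Qed.

Lemma gcat_good x y : goodgs x -> goodgs y -> goodgs (gcat x y).
Proof. move=> [H1 H2] [H3 H4]; split => //= pb Hp; case: (List.in_app_or _ _ _ Hp); auto. Qed.

Lemma gpow_good X n x : (forall w, X w -> goodgs w) -> gpow Gt X n x -> goodgs x.
Proof.
move=> HX; elim: n x => [|n IH] x /=; first by case=> H1 H2; split => //; rewrite H1.
move=> [x1 [x2 [H1 [H2 [_ ->]]]]]; apply: gcat_good; [exact: HX|exact: IH].
Qed.

Lemma GSG_good Ga e x : GSG Ga Gt e x -> goodgs x.
Proof.
elim: e x => [p|b|e1 IH1 e2 IH2|e1 IH1 e2 IH2|e1 IH1] x /=.
- by move=> [a [b [-> [H1 [H2 _]]]]]; split => //= pb [<-|].
- by move=> [H1 [H2 _]]; split => //; rewrite H1.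
- case; auto.
- move=> [x1 [x2 [H1 [H2 [_ ->]]]]]; apply: gcat_good; auto.
- move=> [n Hn]; exact: gpow_good Hn.
Qed.

Lemma fuse_mono X X' Y Y' x :
  (forall w, X w -> X' w) -> (forall w, Y w -> Y' w) -> gfuse X Y x -> gfuse X' Y' x.
Proof. move=> H1 H2 [a [b [Ha [Hb [E ->]]]]]; exists a, b; auto. Qed.

Lemma fuse_iff X X' Y Y' x :
  (forall w, X w <-> X' w) -> (forall w, Y w <-> Y' w) -> (gfuse X Y x <-> gfuse X' Y' x).
Proof. move=> H1 H2; split; apply: fuse_mono => w; by [move/H1|move/H2]. Qed.

Lemma gpow_iff X Y n x : (forall w, X w <-> Y w) -> (gpow Gt X n x <-> gpow Gt Y n x).
Proof. move=> H; elim: n x => [|n IH] x //=; exact: fuse_iff. Qed.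

Lemma fuse_assoc X Y Z x : gfuse (gfuse X Y) Z x <-> gfuse X (gfuse Y Z) x.
Proof.
split.
  move=> [w [c [[a [b [Ha [Hb [Eab ->]]]]] [Hc [Ewc ->]]]]].
  exists a, (gcat b c); split => //; split.
    by exists b, c; do 2 split => //; rewrite -Ewc glast_gcat.
  by split => //=; rewrite catA.
move=> [a [w [Ha [[b [c [Hb [Hc [Ebc ->]]]]] [Eaw ->]]]]].
exists (gcat a b), c; split; first by exists a, b.
by split => //; split; [rewrite glast_gcat | rewrite /= catA].
Qed.

Lemma fuse_one_l X x : (forall w, X w -> AtG Gt w.1) -> (gfuse (AtG_set Gt) X x <-> X x).
Proof.
move=> HX; split.
  move=> [[a s] [y [[Hs Ha] [Hy [E ->]]]]]; simpl in Hs; subst s.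
  rewrite /glast /gfirst /= in E; rewrite /= E; by case: y Hy E.
move=> Hx; exists (x.1, [::]), x; split; first by rewrite /AtG_set /=; split => //; apply: HX.
split => //; split => //; by case: x Hx.
Qed.

Lemma fuse_one_r X x : (forall w, X w -> AtG Gt (glast w)) -> (gfuse X (AtG_set Gt) x <-> X x).
Proof.
move=> HX; split.
  move=> [y [[a s] [Hy [[Hs Ha] [E ->]]]]]; simpl in Hs; subst s.
  rewrite /= cats0; by case: y Hy E.
move=> Hx; exists x, (glast x, [::]); split => //; split; first by rewrite /AtG_set /=; split => //; apply: HX.
by split => //=; rewrite cats0; case: x Hx.
Qed.

Lemma gpow_snoc X n x y : (forall w, X w -> AtG Gt (glast w)) ->
  gpow Gt X n x -> X y -> glast x = gfirst y -> gpow Gt X n.+1 (gcat x y).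
Proof.
move=> HX; elim: n x => [|n IH] x /=.
  case: x => a s [/= -> Ha] Hy; rewrite /glast /gfirst /= => Hay.
  exists y, (glast y, [::]); split => //; split; first by split => //; apply: HX.
  split => //; case: y Hy Hay => b t /= _ ->; by rewrite cats0.
move=> [x1 [x2 [H1 [H2 [H3 ->]]]]] Hy Hxy.
exists x1, (gcat x2 y); split => //; split.
  by apply: IH => //; rewrite -Hxy /= glast_gcat.
by split => //=; rewrite catA.
Qed.

Lemma gpow_unsnoc X n x : (forall w, X w -> goodgs w) ->
  gpow Gt X n.+1 x -> gfuse (gpow Gt X n) X x.
Proof.
move=> HX; elim: n x => [|n IH] x.
  move=> /= /fuse_one_r H.
  have Hx : X x by apply: H => w /HX; exact: glast_good.
  by apply/fuse_one_l => // w /HX [].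
move=> /= Hx; apply/fuse_assoc; apply: fuse_mono Hx => // w; exact: IH.
Qed.

Definition gtest X := forall x, X x -> x.2 = [::].

Lemma fuse_test X Y x : gtest X -> gtest Y -> (gfuse X Y x <-> X x /\ Y x).
Proof.
move=> HX HY; split.
  move=> [[a1 a2] [[b1 b2] [Ha [Hb [E ->]]]]].
  have Ea := HX _ Ha; have Eb := HY _ Hb; simpl in Ea, Eb; subst a2 b2.
  rewrite /glast /gfirst /= in E; subst b1; by split.
move=> [Hx Hy]; exists x, x; do 2 split => //; have E := HX _ Hx.
split; first by rewrite /glast /gfirst E.
by case: x Hx Hy E => a s /= _ _ ->.
Qed.
End GuardedStrings.

Section GuardedStringModel.
Variables k l : nat.
Variable Gt : seq (bexp l * bexp l).
Notation good := (@goodgs k l Gt).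

Definition gcar := {X : gset k l | forall x, X x -> good x}.

Lemma gext (X Y : gcar) : (forall x, sval X x <-> sval Y x) -> X = Y.
Proof.
case: X Y => [X HX] [Y HY] /= H.
have E : X = Y by apply: functional_extensionality => x; apply: propositional_extensionality.
subst Y; f_equal; apply: proof_irrelevance.
Qed.

Lemma good_first (X : gcar) w : sval X w -> AtG Gt w.1.
Proof. by move/(proj2_sig X) => []. Qed.
Lemma good_last (X : gcar) w : sval X w -> AtG Gt (glast w).
Proof. move/(proj2_sig X); exact: glast_good. Qed.

Lemma gzero_good x : (fun _ : gstring k l => False) x -> good x. Proof. by []. Qed.
Definition gzero : gcar := exist _ _ gzero_good.

Lemma gone_good x : AtG_set Gt x -> good x.
Proof. by move=> [H1 H2]; split => //; rewrite H1. Qed.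
Definition gone : gcar := exist _ _ gone_good.

Lemma gadd_good (X Y : gcar) x : sval X x \/ sval Y x -> good x.
Proof. case=> H; [exact: (proj2_sig X) | exact: (proj2_sig Y)]. Qed.
Definition gadd (X Y : gcar) : gcar := exist _ _ (@gadd_good X Y).

Lemma gmul_good (X Y : gcar) x : gfuse (sval X) (sval Y) x -> good x.
Proof.
move=> [a [b [Ha [Hb [_ ->]]]]]; apply: gcat_good; [exact: (proj2_sig X) | exact: (proj2_sig Y)].
Qed.
Definition gmul (X Y : gcar) : gcar := exist _ _ (@gmul_good X Y).

Lemma gstar_good (X : gcar) x : (exists n, gpow Gt (sval X) n x) -> good x.
Proof. move=> [n Hn]; apply: gpow_good Hn; exact: (proj2_sig X). Qed.
Definition gstar (X : gcar) : gcar := exist _ _ (@gstar_good X).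

(* Tests are sets of atoms; the complement is taken inside At^Gamma. *)
Definition gneg_set (X : gcar) : gset k l := fun x => x.2 = [::] /\ AtG Gt x.1 /\ ~ sval X x.
Lemma gneg_good (X : gcar) x : gneg_set X x -> good x.
Proof. by move=> [H1 [H2 _]]; split => //; rewrite H1. Qed.
Definition gneg (X : gcar) : gcar := exist _ _ (@gneg_good X).

Definition gktest (X : gcar) : Prop := gtest (sval X).

Lemma m_addA x y z : gadd x (gadd y z) = gadd (gadd x y) z.
Proof. apply: gext => w /=; tauto. Qed.
Lemma m_addC x y : gadd x y = gadd y x.
Proof. apply: gext => w /=; tauto. Qed.
Lemma m_add0 x : gadd x gzero = x.
Proof. apply: gext => w /=; tauto. Qed.
Lemma m_addI x : gadd x x = x.
Proof. apply: gext => w /=; tauto. Qed.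
Lemma m_mulA x y z : gmul x (gmul y z) = gmul (gmul x y) z.
Proof. apply: gext => w /=; split => /fuse_assoc //. Qed.
Lemma m_mul1l x : gmul gone x = x.
Proof. apply: gext => w /=; apply: fuse_one_l; exact: good_first. Qed.
Lemma m_mul1r x : gmul x gone = x.
Proof. apply: gext => w /=; apply: fuse_one_r; exact: good_last. Qed.
Lemma m_mulDl x y z : gmul x (gadd y z) = gadd (gmul x y) (gmul x z).
Proof.
apply: gext => w /=; split.
  move=> [a [b [Ha [[Hb|Hb] H]]]]; [left|right]; by exists a, b.
by case=> [[a [b [Ha [Hb H]]]]|[a [b [Ha [Hb H]]]]]; exists a, b; do 2 split => //; [left|right].
Qed.
Lemma m_mulDr x y z : gmul (gadd x y) z = gadd (gmul x z) (gmul y z).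
Proof.
apply: gext => w /=; split.
  move=> [a [b [[Ha|Ha] H]]]; [left|right]; by exists a, b.
by case=> [[a [b [Ha H]]]|[a [b [Ha H]]]]; exists a, b; split => //; [left|right].
Qed.
Lemma m_mul0l x : gmul gzero x = gzero.
Proof. by apply: gext => w /=; split => // [[a [b [Ha _]]]]. Qed.
Lemma m_mul0r x : gmul x gzero = gzero.
Proof. by apply: gext => w /=; split => // [[a [b [_ [Hb _]]]]]. Qed.

Lemma m_unfoldl x : gadd (gadd gone (gmul x (gstar x))) (gstar x) = gstar x.
Proof.
apply: gext => w /=; split; last by right.
case; [case|] => //; first by move=> H; exists 0.
move=> [a [b [Ha [[n Hb] H]]]]; exists n.+1; by exists a, b.
Qed.

Lemma m_unfoldr x : gadd (gadd gone (gmul (gstar x) x)) (gstar x) = gstar x.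
Proof.
apply: gext => w /=; split; last by right.
case; [case|] => //; first by move=> H; exists 0.
move=> [a [b [[n Ha] [Hb [E ->]]]]]; exists n.+1; apply: gpow_snoc => //; exact: good_last.
Qed.

(* Star induction holds because a^n <> b is included in any x with
   b + a x <= x, by induction on n (and symmetrically on the right). *)
Lemma m_indl a b x : gadd (gadd b (gmul a x)) x = x -> gadd (gmul (gstar a) b) x = x.
Proof.
move=> Hx; have H w : sval (gadd (gadd b (gmul a x)) x) w -> sval x w by rewrite Hx.
apply: gext => w /=; split; last by right.
have Hb v : sval b v -> sval x v by move=> Hv; apply: H; left; left.
have Ha v : gfuse (sval a) (sval x) v -> sval x v by move=> Hv; apply: H; left; right.
case=> // [[u [v [[n Hu] [Hv [E ->]]]]]].
have : gfuse (gpow Gt (sval a) n) (sval b) (gcat u v) by exists u, v.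
elim: n {u v Hu Hv E} (gcat u v) => [|n IH] y /=.
  by move/fuse_one_l => /(_ (@good_first b)); apply: Hb.
move/fuse_assoc => Hy; apply: Ha; apply: fuse_mono Hy => // v; exact: IH.
Qed.

Lemma m_indr a b x : gadd (gadd b (gmul x a)) x = x -> gadd (gmul b (gstar a)) x = x.
Proof.
move=> Hx; have H w : sval (gadd (gadd b (gmul x a)) x) w -> sval x w by rewrite Hx.
apply: gext => w /=; split; last by right.
have Hb v : sval b v -> sval x v by move=> Hv; apply: H; left; left.
have Ha v : gfuse (sval x) (sval a) v -> sval x v by move=> Hv; apply: H; left; right.
case=> // [[u [v [Hu [[n Hv] [E ->]]]]]].
have : gfuse (sval b) (gpow Gt (sval a) n) (gcat u v) by exists u, v.
elim: n {u v Hu Hv E} (gcat u v) => [|n IH] y.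
  by move/fuse_one_r => /(_ (@good_last b)); apply: Hb.
move=> Hy.
have Hy' : gfuse (sval b) (gfuse (gpow Gt (sval a) n) (sval a)) y.
  apply: fuse_mono Hy => // v; apply: gpow_unsnoc; exact: (proj2_sig a).
move/fuse_assoc: Hy' => Hy'; apply: Ha; apply: fuse_mono Hy' => // v; exact: IH.
Qed.

Lemma m_test0 : gktest gzero. Proof. by []. Qed.
Lemma m_test1 : gktest gone. Proof. by move=> x []. Qed.
Lemma m_testD b c : gktest b -> gktest c -> gktest (gadd b c).
Proof. by move=> Hb Hc x [/Hb|/Hc]. Qed.
Lemma m_testM b c : gktest b -> gktest c -> gktest (gmul b c).
Proof. by move=> Hb Hc x /(fuse_test _ Hb Hc) [/Hb]. Qed.
Lemma m_testN b : gktest b -> gktest (gneg b).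
Proof. by move=> Hb x []. Qed.
Lemma m_mulC b c : gktest b -> gktest c -> gmul b c = gmul c b.
Proof. move=> Hb Hc; apply: gext => w /=; rewrite !fuse_test //; tauto. Qed.
Lemma m_addDr b c d : gktest b -> gktest c -> gktest d ->
  gadd b (gmul c d) = gmul (gadd b c) (gadd b d).
Proof.
move=> Hb Hc Hd; apply: gext => w /=.
have H1 : gtest (fun x => sval b x \/ sval c x) by move=> x [/Hb|/Hc].
have H2 : gtest (fun x => sval b x \/ sval d x) by move=> x [/Hb|/Hd].
rewrite (fuse_test _ H1 H2) (fuse_test _ Hc Hd); tauto.
Qed.
Lemma m_compl1 b : gktest b -> gadd b (gneg b) = gone.
Proof.
move=> Hb; apply: gext => w /=; split.
  case=> [H|[H1 [H2 _]]]; last by split.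
  by split; [apply: Hb | apply: (good_first H)].
move=> [H1 H2]; case: (classic (sval b w)) => H; [by left | by right].
Qed.
Lemma m_compl0 b : gktest b -> gmul b (gneg b) = gzero.
Proof.
move=> Hb; apply: gext => w /=; rewrite fuse_test //; last by move=> x [].
by split => // [[H [_ [_ H']]]].
Qed.

Definition GSKAT : KAT :=
  @MkKAT gcar gadd gmul gstar gzero gone gktest gneg
    m_addA m_addC m_add0 m_addI m_mulA m_mul1l m_mul1r m_mulDl m_mulDr m_mul0l m_mul0r
    m_unfoldl m_unfoldr m_indl m_indr m_test0 m_test1 m_testD m_testM m_testN
    m_mulC m_addDr m_compl1 m_compl0.
End GuardedStringModel.

Section Soundness.
Variables k l : nat.
Variable Ga : seq (bexp l * 'I_k * bexp l).
Variable Gt : seq (bexp l * bexp l).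
Notation M := (GSKAT k Gt).

Definition Im (p : 'I_k) : M := exist _ _ (@GSG_good k l Gt Ga (@KAct k l p)).

Definition Jset (t : 'I_l) : gset k l := fun x => x.2 = [::] /\ AtG Gt x.1 /\ x.1 t.
Lemma Jset_good t x : Jset t x -> goodgs Gt x.
Proof. by move=> [H1 [H2 _]]; split => //; rewrite H1. Qed.
Definition Jm (t : 'I_l) : M := exist _ _ (@Jset_good t).

Lemma Jm_test t : ktest (Jm t). Proof. by move=> x []. Qed.

Lemma beval_model b x : sval (beval Jm b : M) x <-> x.2 = [::] /\ AtG Gt x.1 /\ bsat x.1 b.
Proof.
elim: b x => [|||b IH|b1 IH1 b2 IH2|b1 IH1 b2 IH2] x /=.
- by split => // [[_ [_ H]]].
- by split => [[H1 H2]|[H1 [H2 _]]].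
- by [].
- split => [[H1 [H2 H3]]|[H1 [H2 H3]]]; do 2 (split => //).
    by apply/negP => H; apply: H3; apply/IH.
  by move/IH => [_ [_ H]]; move/negP: H3.
- rewrite IH1 IH2; split => [[|]|[H1 [H2 /orP [H|H]]]]; try tauto.
    by move=> [H1 [H2 H3]]; rewrite H3.
  by move=> [H1 [H2 H3]]; rewrite H3 orbT.
- have T1 : gtest (sval (beval Jm b1 : M)) by move=> y /IH1 [].
  have T2 : gtest (sval (beval Jm b2 : M)) by move=> y /IH2 [].
  rewrite (fuse_test _ T1 T2) IH1 IH2; split.
    by move=> [[H1 [H2 H3]] [_ [_ H4]]]; rewrite H3 H4.
  by move=> [H1 [H2 /andP [H3 H4]]].
Qed.

Lemma keval_model e x : sval (keval Im Jm e : M) x <-> GSG Ga Gt e x.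
Proof.
elim: e x => [p|b|e1 IH1 e2 IH2|e1 IH1 e2 IH2|e1 IH1] x /=.
- by [].
- exact: beval_model.
- by rewrite IH1 IH2.
- exact: fuse_iff.
- have Hi n y : gpow Gt (sval (keval Im Jm e1 : M)) n y <-> gpow Gt (GSG Ga Gt e1) n y.
    exact: gpow_iff.
  by split=> [[n /Hi Hn]|[n /Hi Hn]]; exists n.
Qed.

(* A string alpha p beta of GS^Gamma(p) with alpha <= b ends in beta <= b',
   so  b p ~b'  is empty for every action hypothesis. *)
Lemma model_action_hyp a : List.In a Ga ->
  kmul (kmul (beval Jm a.1.1) (Im a.1.2)) (kneg (beval Jm a.2)) = kzero M.
Proof.
move=> Ha; apply: gext => w /=; split => // [[u [c [[a0 [y [Ha0 [Hy [E1 ->]]]]] [Hc [E2 Ew]]]]]].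
have [Ha2 [_ Hb]] := (beval_model _ _).1 Ha0.
move: Hc => [Hc2 [HcA Hc']].
move: Hy => [al [be [Ey [_ [_ Hcond]]]]].
have Eal : a0.1 = al by rewrite /glast /gfirst Ha2 Ey /= in E1.
have Ebe : c.1 = be by rewrite -[c.1]/(gfirst c) -E2 (glast_gcat E1) Ey.
apply: Hc'; apply: (beval_model _ _).2; do 2 (split => //).
by rewrite Ebe; apply: (Hcond a Ha) => //; rewrite -Eal.
Qed.

(* Test hypotheses hold because only atoms of At^Gamma are present. *)
Lemma model_test_hyp c : List.In c Gt -> kle (beval Jm c.1 : M) (beval Jm c.2).
Proof.
move=> Hc; apply: gext => w /=; split; last by right.
case=> // /(beval_model _ _).1 [H1 [H2 H3]].
by apply/(beval_model _ _).2; do 2 (split => //); exact: H2.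
Qed.

Lemma model_Gamma : Gamma_holds Im Jm Ga Gt.
Proof. split; [exact: model_action_hyp | exact: model_test_hyp]. Qed.

Lemma derivable_GSG_eq e1 e2 :
  KAT_derivable Ga Gt e1 e2 -> forall x, GSG Ga Gt e1 x <-> GSG Ga Gt e2 x.
Proof.
move=> H x; have E := H _ _ _ Jm_test model_Gamma.
by rewrite -keval_model E keval_model.
Qed.
End Soundness.

Section Runs.
Variables k l : nat.
Variable Q : Type.
Variable dl : Q -> atom l -> 'I_k -> Q.

Fixpoint runl (q : Q) (al : atom l) (s : seq ('I_k * atom l)) : Q :=
  match s with [::] => q | (p, b) :: s' => runl (dl q al p) b s' end.
Definition run q (x : gstring k l) := runl q x.1 x.2.

Lemma runl_cat q al s1 s2 :
  runl q al (s1 ++ s2) = runl (runl q al s1) (last al (map snd s1)) s2.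
Proof. by elim: s1 q al => [|[p b] s1 IH] q al //=. Qed.

Lemma run_gcat q (x y : gstring k l) : glast x = gfirst y ->
  run q (gcat x y) = run (run q x) y.
Proof. rewrite /run /= runl_cat /glast /gfirst => ->; by case: y. Qed.
End Runs.

(* Decidable equality of Boolean and KAT expressions, so that finite sets of
   expressions can serve as automaton states. *)
Fixpoint beqb l (b c : bexp l) : bool :=
  match b, c with
  | BZero, BZero => true
  | BOne, BOne => true
  | BTest t, BTest t' => t == t'
  | BNeg b, BNeg c => beqb b c
  | BAdd b1 b2, BAdd c1 c2 => beqb b1 c1 && beqb b2 c2
  | BMul b1 b2, BMul c1 c2 => beqb b1 c1 && beqb b2 c2
  | _, _ => false
  end.

Lemma beqbP l : Equality.axiom (@beqb l).
Proof.
elim=> [||t|b IH|b1 IH1 b2 IH2|b1 IH1 b2 IH2] [||t'|c|c1 c2|c1 c2] /=; try by constructor.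
- by apply: (iffP eqP) => [->|[]].
- by apply: (iffP (IH c)) => [->|[]].
- apply: (iffP andP) => [[/IH1 -> /IH2 ->]|[<- <-]] //; split; [exact/IH1|exact/IH2].
- apply: (iffP andP) => [[/IH1 -> /IH2 ->]|[<- <-]] //; split; [exact/IH1|exact/IH2].
Qed.

HB.instance Definition _ l := hasDecEq.Build (bexp l) (@beqbP l).

Fixpoint keqb k l (e f : kexp k l) : bool :=
  match e, f with
  | KAct p, KAct p' => p == p'
  | KTest b, KTest c => b == c
  | KAdd e1 e2, KAdd f1 f2 => keqb e1 f1 && keqb e2 f2
  | KMul e1 e2, KMul f1 f2 => keqb e1 f1 && keqb e2 f2
  | KStar e, KStar f => keqb e f
  | _, _ => false
  end.

Lemma keqbP k l : Equality.axiom (@keqb k l).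
Proof.
elim=> [p|b|e1 IH1 e2 IH2|e1 IH1 e2 IH2|e IH] [p'|c|f1 f2|f1 f2|f] /=; try by constructor.
- by apply: (iffP eqP) => [->|[]].
- by apply: (iffP eqP) => [->|[]].
- apply: (iffP andP) => [[/IH1 -> /IH2 ->]|[<- <-]] //; split; [exact/IH1|exact/IH2].
- apply: (iffP andP) => [[/IH1 -> /IH2 ->]|[<- <-]] //; split; [exact/IH1|exact/IH2].
- by apply: (iffP (IH f)) => [->|[]].
Qed.

HB.instance Definition _ k l := hasDecEq.Build (kexp k l) (@keqbP k l).

(* Antimirov-style derivatives with respect to an atom and an action. *)
Section Derivatives.
Variables k l : nat.
Notation kx := (kexp k l).
Notation GS := (@GSG k l [::] [::]).

(* Eps alpha e: the single atom alpha is a guarded string of e. *)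
Fixpoint Eps (al : atom l) (e : kx) : bool :=
  match e with
  | KAct _ => false
  | KTest b => bsat al b
  | KAdd g h => Eps al g || Eps al h
  | KMul g h => Eps al g && Eps al h
  | KStar _ => true
  end.

(* Der alpha p e: expressions whose strings beta... continue alpha p beta... in e. *)
Fixpoint Der (al : atom l) (p : 'I_k) (e : kx) : seq kx :=
  match e with
  | KAct q => if q == p then [:: @KTest k l BOne] else [::]
  | KTest _ => [::]
  | KAdd g h => Der al p g ++ Der al p h
  | KMul g h => map (fun d => KMul d h) (Der al p g) ++ (if Eps al g then Der al p h else [::])
  | KStar g => map (fun d => KMul d (KStar g)) (Der al p g)
  end.

(* A finite set containing all iterated derivatives of e. *)
Fixpoint PD (e : kx) : seq kx :=
  match e with
  | KAct _ => [:: @KTest k l BOne]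
  | KTest _ => [::]
  | KAdd g h => PD g ++ PD h
  | KMul g h => map (fun d => KMul d h) (PD g) ++ PD h
  | KStar g => map (fun d => KMul d (KStar g)) (PD g)
  end.

Lemma Der_PD al p e d : d \in Der al p e -> d \in PD e.
Proof.
elim: e d => [q|b|g IHg h IHh|g IHg h IHh|g IHg] d /=.
- by case: (q == p).
- by [].
- by rewrite !mem_cat => /orP [/IHg ->|/IHh ->] //; rewrite orbT.
- rewrite !mem_cat => /orP [/mapP [d0 Hd0 ->]|]; first by rewrite map_f // IHg.
  by case: (Eps al g) => // /IHh ->; rewrite orbT.
- by move=> /mapP [d0 Hd0 ->]; rewrite map_f // IHg.
Qed.

Lemma PD_closed al p e d d' : d \in PD e -> d' \in Der al p d -> d' \in PD e.
Proof.
elim: e d d' => [q|b|g IHg h IHh|g IHg h IHh|g IHg] d d' /=.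
- by rewrite inE => /eqP ->.
- by [].
- by rewrite !mem_cat => /orP [/IHg H /H ->|/IHh H /H ->] //; rewrite orbT.
- rewrite !mem_cat => /orP [/mapP [d0 Hd0 ->]|Hd Hd']; last by rewrite (IHh d) // orbT.
  rewrite /= mem_cat => /orP [/mapP [d1 Hd1 ->]|]; first by rewrite map_f // (IHg d0).
  by case: (Eps al d0) => // /Der_PD ->; rewrite orbT.
- move=> /mapP [d0 Hd0 ->] /=; rewrite mem_cat => /orP [/mapP [d1 Hd1 ->]|].
    by rewrite map_f // (IHg d0).
  by case: (Eps al d0) => // /mapP [d1 Hd1 ->]; rewrite map_f // (Der_PD Hd1).
Qed.

Lemma gpow_forget Gt (X Y : gset k l) n x :
  (forall w, X w -> Y w) -> gpow Gt X n x -> gpow [::] Y n x.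
Proof.
move=> HXY; elim: n x => [|n IH] x /=; first by move=> H; split; [exact: H.1 | done].
move=> [x1 [x2 [H1 [H2 H3]]]]; exists x1, x2; split; [exact: HXY | split; [exact: IH|done]].
Qed.

Lemma GSG_forget Ga Gt (e : kx) x : GSG Ga Gt e x -> GS e x.
Proof.
elim: e x => [p|b|e1 IH1 e2 IH2|e1 IH1 e2 IH2|e1 IH1] x /=.
- by move=> [a [b [-> _]]]; exists a, b; do 3 (split => //).
- by move=> [H1 [H2 H3]]; do 2 (split => //).
- case; auto.
- move=> [x1 [x2 [H1 [H2 H3]]]]; exists x1, x2; auto.
- move=> [n Hn]; exists n; exact: gpow_forget Hn.
Qed.

Definition DerCover (e : kx) (x : gstring k l) :=
  (x.2 = [::] -> Eps x.1 e) /\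
  (forall p b s, x.2 = (p, b) :: s -> exists2 d, d \in Der x.1 p e & GS d (b, s)).

Lemma DerCover_head g h x1 x2 p b s1 : x1.2 = (p, b) :: s1 ->
  DerCover g x1 -> GS h x2 -> glast x1 = gfirst x2 ->
  exists2 d, d \in Der x1.1 p g & GS (KMul d h) (b, s1 ++ x2.2).
Proof.
move=> E [_ H] Hx2 Hl; have [d Hd Hd'] := H _ _ _ E.
by exists d => //; exists (b, s1), x2; do 3 (split => //); rewrite -Hl /glast E.
Qed.

Lemma DerCover_mul g h x1 x2 : DerCover g x1 -> DerCover h x2 -> GS h x2 ->
  glast x1 = gfirst x2 -> DerCover (KMul g h) (gcat x1 x2).
Proof.
move=> C1 [B1 B2] Hx2 Hl; case E: x1.2 (C1) Hl => [|[p b] s1] [A1 A2] Hl /=.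
  have Ex : x2.1 = x1.1 by rewrite -[x2.1]/(gfirst x2) -Hl /glast E.
  have HA : Eps x1.1 g by exact: A1.
  split => [Hx|p b s Hx]; first by apply/andP; split; last by rewrite -Ex; apply: B1.
  have [d Hd Hd'] := B2 _ _ _ Hx; exists d => //.
  by rewrite /= mem_cat HA -Ex Hd orbT.
split => // p' b' s [<- <- <-].
have [d Hd Hd'] := DerCover_head E C1 Hx2 Hl.
by exists (KMul d h); first by rewrite mem_cat map_f.
Qed.

Lemma DerCover_star g x1 x2 : DerCover g x1 -> DerCover (KStar g) x2 -> GS (KStar g) x2 ->
  glast x1 = gfirst x2 -> DerCover (KStar g) (gcat x1 x2).
Proof.
move=> C1 [B1 B2] Hx2 Hl; case E: x1.2 (C1) Hl => [|[p b] s1] [A1 A2] Hl /=.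
  have Ex : x2.1 = x1.1 by rewrite -[x2.1]/(gfirst x2) -Hl /glast E.
  by split => // p b s /B2; rewrite Ex.
split => // p' b' s [<- <- <-].
have [d Hd Hd'] := DerCover_head E C1 Hx2 Hl.
by exists (KMul d (KStar g)); first by rewrite map_f.
Qed.

Lemma Der_cover e x : GS e x -> DerCover e x.
Proof.
elim: e x => [q|b|g IHg h IHh|g IHg h IHh|g IHg] x /=.
- move=> [a [b [-> _]]]; split => // p b' s [<- <- <-] /=.
  by exists (@KTest k l BOne); [rewrite eqxx inE | do 2 (split => //)].
- by move=> [H1 [_ H3]]; split => [_|p b' s] //; rewrite H1.
- case=> [/IHg [H1 H2]|/IHh [H1 H2]]; split => [Hx|p b s Hx].
  + by apply/orP; left; apply: H1.
  + by have [d Hd Hd'] := H2 _ _ _ Hx; exists d => //; rewrite mem_cat Hd.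
  + by apply/orP; right; apply: H1.
  + by have [d Hd Hd'] := H2 _ _ _ Hx; exists d => //; rewrite mem_cat Hd orbT.
- move=> [x1 [x2 [Hx1 [Hx2 [Hl ->]]]]].
  exact: DerCover_mul (IHg _ Hx1) (IHh _ Hx2) Hx2 Hl.
- move=> [n Hn]; elim: n x Hn => [|n IHn] x /=.
    by move=> [H1 _]; split => // p b s; rewrite H1.
  move=> [x1 [x2 [Hx1 [Hx2 [Hl ->]]]]].
  by apply: DerCover_star (IHg _ Hx1) (IHn _ Hx2) _ Hl; exists n.
Qed.

Section DerivativesInKAT.
Variable K : KAT.
Variable I : 'I_k -> K.
Variable J : 'I_l -> K.
Hypothesis hJ : forall t, ktest (J t).

Lemma Eps_le al e : Eps al e -> atomk J al ≦ keval I J e.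
Proof.
elim: e => [q|b|g IHg h IHh|g IHg h IHh|g IHg] //=.
- exact: atom_sat.
- case/orP=> H; [exact: le_trans (IHg H) (le_addl _ _)|exact: le_trans (IHh H) (le_addr _ _)].
- case/andP=> H1 H2; rewrite -(atomk_idem hJ); exact: mul_le2 (IHg H1) (IHh H2).
- move=> _; apply: le_trans (one_le_star _); apply: test_le1; exact: atomk_test.
Qed.

Lemma Der_le al p e d : d \in Der al p e -> atomk J al ⊗ I p ⊗ keval I J d ≦ keval I J e.
Proof.
elim: e d => [q|b|g IHg h IHh|g IHg h IHh|g IHg] d //=.
- case: eqP => [->|_] //; rewrite inE => /eqP -> /=; rewrite kmul1r.
  apply: test_mul_ler; exact: atomk_test.
- rewrite mem_cat => /orP [/IHg H|/IHh H];
    [exact: le_trans H (le_addl _ _)|exact: le_trans H (le_addr _ _)].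
- rewrite mem_cat => /orP [/mapP [d0 Hd0 ->]|] /=.
    rewrite kmulA; apply: mul_ler; exact: IHg.
  case E: (Eps al g) => // /IHh H.
  have -> : atomk J al ⊗ I p ⊗ keval I J d = atomk J al ⊗ (atomk J al ⊗ I p ⊗ keval I J d).
    by rewrite !kmulA atomk_idem.
  apply: mul_le2 H; exact: Eps_le.
- move=> /mapP [d0 Hd0 ->] /=; rewrite kmulA.
  apply: le_trans (mul_ler _ (IHg _ Hd0)) _; exact: mul_star_le.
Qed.
End DerivativesInKAT.
End Derivatives.

(* Star of a Q x Q matrix by successive elimination of pivot states
   (McNaughton-Yamada): path_mx ps i j sums the paths from i to j whose
   intermediate states lie in ps. *)
Section MatrixStar.
Variable K : KAT.
Variable Q : finType.
Variable A : Q -> Q -> K.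

Fixpoint path_mx (ps : seq Q) (i j : Q) : K :=
  match ps with
  | [::] => A i j
  | m :: ps' => path_mx ps' i j ⊕ path_mx ps' i m ⊗ kstar (path_mx ps' m m) ⊗ path_mx ps' m j
  end.

Lemma A_le_path_mx ps i j : A i j ≦ path_mx ps i j.
Proof. elim: ps => [|m ps IH] /=; [exact: le_refl | exact: le_trans IH (le_addl _ _)]. Qed.

Lemma path_mx_postfix (y : Q -> K) : (forall i j, A i j ⊗ y j ≦ y i) ->
  forall ps i j, path_mx ps i j ⊗ y j ≦ y i.
Proof.
move=> Hy; elim=> [|m ps IH] i j //=.
rewrite kmulDr; apply: add_le => //.
rewrite -!kmulA; apply: le_trans (IH i m); apply: mul_lel.
apply: le_trans (mul_lel _ (IH m j)) _.
apply: star_ind_l; [exact: le_refl | exact: IH].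
Qed.

Lemma path_mx_pivot m ps i j :
  path_mx (m :: ps) i m ⊗ path_mx (m :: ps) m j ≦ path_mx (m :: ps) i j.
Proof.
rewrite /=; set S := kstar (path_mx ps m m); apply: le_trans (le_addr _ _).
have H1 : path_mx ps i m ⊕ path_mx ps i m ⊗ S ⊗ path_mx ps m m ≦ path_mx ps i m ⊗ S.
  apply: add_le; last by rewrite -kmulA; apply: mul_lel; exact: star_mul_le.
  rewrite -{1}(kmul1r (path_mx ps i m)); apply: mul_lel; exact: one_le_star.
have H2 : path_mx ps m j ⊕ path_mx ps m m ⊗ S ⊗ path_mx ps m j ≦ S ⊗ path_mx ps m j.
  apply: add_le; last by apply: mul_ler; exact: mul_star_le.
  rewrite -{1}(kmul1l (path_mx ps m j)); apply: mul_ler; exact: one_le_star.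
apply: le_trans (mul_le2 H1 H2) _.
rewrite -!kmulA; apply: mul_lel; rewrite !kmulA; apply: mul_ler; exact: star_star_le.
Qed.

Lemma path_mx_trans ps : forall j, j \in ps ->
  forall i j', path_mx ps i j ⊗ path_mx ps j j' ≦ path_mx ps i j'.
Proof.
elim: ps => [|m ps IH] j //; rewrite in_cons => /orP [/eqP ->|Hj] i j'.
  exact: path_mx_pivot.
rewrite /=; set S := kstar (path_mx ps m m).
have Hthrough x : x ≦ path_mx ps i m ⊗ S ⊗ path_mx ps m j' ->
    x ≦ path_mx ps i j' ⊕ path_mx ps i m ⊗ S ⊗ path_mx ps m j'.
  by move=> Hx; exact: le_trans Hx (le_addr _ _).
rewrite kmulDl !kmulDr; apply: add_le; apply: add_le.
- exact: le_trans (IH _ Hj _ _) (le_addl _ _).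
- apply: Hthrough; rewrite -!kmulA; do 2 apply: mul_lel; exact: IH.
- apply: Hthrough; rewrite !kmulA; do 2 apply: mul_ler; exact: IH.
- apply: Hthrough.
  have -> : path_mx ps i m ⊗ S ⊗ path_mx ps m j ⊗ (path_mx ps j m ⊗ S ⊗ path_mx ps m j') =
            path_mx ps i m ⊗ (S ⊗ (path_mx ps m j ⊗ path_mx ps j m) ⊗ S) ⊗ path_mx ps m j'.
    by rewrite !kmulA.
  apply: mul_ler; apply: mul_lel; apply: le_trans (star_star_le _).
  apply: mul_ler; apply: le_trans (mul_lel _ (IH _ Hj _ _)) _; exact: star_mul_le.
Qed.

Definition mx_star := path_mx (enum Q).

Lemma mx_star_trans i j j' : mx_star i j ⊗ mx_star j j' ≦ mx_star i j'.
Proof. apply: path_mx_trans; by rewrite mem_enum. Qed.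

Lemma mx_star_postfix (y : Q -> K) : (forall i j, A i j ⊗ y j ≦ y i) ->
  forall i j, mx_star i j ⊗ y j ≦ y i.
Proof. by move=> Hy; apply: path_mx_postfix. Qed.
End MatrixStar.

Section AutomatonMatrix.
Variable K : KAT.
Variables k l : nat.
Variable I : 'I_k -> K.
Variable J : 'I_l -> K.
Variable Q : finType.
Variable dl : Q -> atom l -> 'I_k -> Q.

Definition trans_mx (i j : Q) : K :=
  (if i == j then kone K else kzero K) ⊕
  ksum (fun ap : atom l * 'I_k => dl i ap.1 ap.2 = j) (fun ap => atomk J ap.1 ⊗ I ap.2).

Notation Z := (mx_star trans_mx).

Lemma mx_star_one q : kone K ≦ Z q q.
Proof.
have Hdiag : kone K ≦ trans_mx q q by rewrite /trans_mx eqxx; exact: le_addl.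
exact: le_trans Hdiag (A_le_path_mx _ _ _ _).
Qed.

Lemma mx_star_step q0 q al p : Z q0 q ⊗ atomk J al ⊗ I p ≦ Z q0 (dl q al p).
Proof.
rewrite -kmulA; apply: le_trans (mx_star_trans trans_mx q0 q (dl q al p)); apply: mul_lel.
have Hedge : atomk J al ⊗ I p ≦ trans_mx q (dl q al p).
  apply: le_trans (le_addr _ _); exact: (@le_ksum _ _ _ _ (al, p)) (le_refl _).
exact: le_trans Hedge (A_le_path_mx _ _ _ _).
Qed.
End AutomatonMatrix.

(* Fix a KAT satisfying Gamma and a deterministic
   automaton dl with elements z q such that z q . alpha . p <= z (dl q alpha p).
   Then z q . alpha . e is bounded by the sum of z q' . beta over the pairs
   (q', beta) reached by reading from q a guarded string alpha...beta of
   GS^Gamma(e). *)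
Section MainEstimate.
Variable K : KAT.
Variables k l : nat.
Variable I : 'I_k -> K.
Variable J : 'I_l -> K.
Hypothesis hJ : forall t, ktest (J t).
Variable Ga : seq (bexp l * 'I_k * bexp l).
Variable Gt : seq (bexp l * bexp l).
Hypothesis HG : Gamma_holds I J Ga Gt.

Notation at_ := (atomk J).

Lemma atom_outside_AtG al : ~ AtG Gt al -> at_ al = kzero K.
Proof.
move=> H.
have [c [Hc H']] : exists c, List.In c Gt /\ ~ (bsat al c.1 -> bsat al c.2).
  apply: NNPP => H1; apply: H => c Hc; apply: NNPP => H2; apply: H1; by exists c.
have H1 : bsat al c.1 by apply: NNPP => H3; apply: H'.
have H2 : ~~ bsat al c.2 by apply/negP => H3; apply: H'.
have Hle : at_ al ≦ beval J c.2 := le_trans (atom_sat hJ H1) (HG.2 c Hc).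
by rewrite (test_le_eq (atomk_test hJ al) (beval_test hJ _) Hle) atom_unsat.
Qed.

Lemma forbidden_step a al b : List.In a Ga -> bsat al a.1.1 -> ~~ bsat b a.2 ->
  at_ al ⊗ I a.1.2 ⊗ at_ b = kzero K.
Proof.
move=> Ha H1 H2; rewrite (atom_sat_eq hJ H1) (atom_unsat_eq hJ H2).
have -> : at_ al ⊗ beval J a.1.1 ⊗ I a.1.2 ⊗ (kneg (beval J a.2) ⊗ at_ b) =
  at_ al ⊗ (beval J a.1.1 ⊗ I a.1.2 ⊗ kneg (beval J a.2)) ⊗ at_ b by rewrite !kmulA.
by rewrite (HG.1 a Ha) kmul0r kmul0l.
Qed.

Variable Q : finType.
Variable dl : Q -> atom l -> 'I_k -> Q.
Variable z : Q -> K.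
Hypothesis zstep : forall q al p, z q ⊗ at_ al ⊗ I p ≦ z (dl q al p).

Definition Reach e q al q' b :=
  exists x, GSG Ga Gt e x /\ x.1 = al /\ run dl q x = q' /\ glast x = b.
Definition reach_sum e q al :=
  ksum (fun qb : Q * atom l => Reach e q al qb.1 qb.2) (fun qb => z qb.1 ⊗ at_ qb.2).

Lemma reach_sum_incl e1 e2 q al : (forall x, GSG Ga Gt e1 x -> GSG Ga Gt e2 x) ->
  reach_sum e1 q al ≦ reach_sum e2 q al.
Proof.
move=> H; apply: ksum_mono => qb [x [Hx Hrest]]; exists qb; last exact: le_refl.
by exists x; split => //; apply: H.
Qed.

Lemma reach_sum_cat e1 e2 e3 q al q1 b1 :
  (forall x y, GSG Ga Gt e1 x -> GSG Ga Gt e2 y -> glast x = gfirst y ->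
     GSG Ga Gt e3 (gcat x y)) ->
  Reach e1 q al q1 b1 -> reach_sum e2 q1 b1 ≦ reach_sum e3 q al.
Proof.
move=> H [x [Hx [Hx1 [Hx2 Hx3]]]].
apply: ksum_mono => [[q2 b2]] /= [y [Hy [Hy1 [Hy2 Hy3]]]]; exists (q2, b2); last exact: le_refl.
have Hxy : glast x = gfirst y by rewrite Hx3 -Hy1.
exists (gcat x y); split; first exact: H.
by split => //; split; [rewrite run_gcat // Hx2 | rewrite glast_gcat].
Qed.

Lemma reach_good e q al q' b : Reach e q al q' b -> AtG Gt b.
Proof. by case=> x [/GSG_good Hx [_ [_ <-]]]; apply: glast_good. Qed.

Definition Estimate e := forall q al c, AtG Gt al ->
  c ≦ z q ⊗ at_ al -> c ⊗ keval I J e ≦ reach_sum e q al.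

(* An action p from alpha reaches every good beta allowed by Gamma; the
   other continuations vanish. *)
Lemma estimate_act p : Estimate (@KAct k l p).
Proof.
move=> q al c Hal Hc /=; apply: le_trans (mul_ler _ Hc) _.
rewrite -(kmul1r (_ ⊗ I p)); apply: le_trans (mul_lel _ (sum_atoms hJ)) _.
rewrite ksum_mull; apply: ksum_le => b _.
case: (classic (AtG Gt b)) => Hb; last by rewrite (atom_outside_AtG Hb) kmul0r; apply: le0.
case: (classic (forall a, List.In a Ga -> a.1.2 = p -> bsat al a.1.1 -> bsat b a.2)) => Hok.
  apply: (@le_ksum _ _ _ _ (dl q al p, b)); last exact: mul_ler.
  by exists (al, [:: (p, b)]); split; [exists al, b | split].
have [a [Ha Hn]] : exists a, List.In a Ga /\ ~ (a.1.2 = p -> bsat al a.1.1 -> bsat b a.2).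
  apply: NNPP => H1; apply: Hok => a Ha; apply: NNPP => H2; apply: H1; by exists a.
have Hp : a.1.2 = p by apply: NNPP => H; apply: Hn.
have H1 : bsat al a.1.1 by apply: NNPP => H; apply: Hn.
have H2 : ~~ bsat b a.2 by apply/negP => H; apply: Hn.
have -> : z q ⊗ at_ al ⊗ I p ⊗ at_ b = z q ⊗ (at_ al ⊗ I a.1.2 ⊗ at_ b) by rewrite Hp !kmulA.
rewrite (forbidden_step Ha H1 H2) kmul0r; exact: le0.
Qed.

Lemma estimate_test b : Estimate (@KTest k l b).
Proof.
move=> q al c Hal Hc /=; apply: le_trans (mul_ler _ Hc) _; rewrite -kmulA.
case: (boolP (bsat al b)) => Hb; last by rewrite atom_unsat // kmul0r; exact: le0.
rewrite -(atom_sat_eq hJ Hb); apply: (@le_ksum _ _ _ _ (q, al)); last exact: le_refl.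
by exists (al, [::]).
Qed.

Lemma estimate_add e1 e2 : Estimate e1 -> Estimate e2 -> Estimate (KAdd e1 e2).
Proof.
move=> IH1 IH2 q al c Hal Hc /=; rewrite kmulDl; apply: add_le.
  by apply: le_trans (IH1 _ _ _ Hal Hc) _; apply: reach_sum_incl => x; left.
by apply: le_trans (IH2 _ _ _ Hal Hc) _; apply: reach_sum_incl => x; right.
Qed.

Lemma estimate_mul e1 e2 : Estimate e1 -> Estimate e2 -> Estimate (KMul e1 e2).
Proof.
move=> IH1 IH2 q al c Hal Hc /=; rewrite kmulA.
apply: le_trans (mul_ler _ (IH1 _ _ _ Hal Hc)) _.
rewrite ksum_mulr; apply: ksum_le => [[q1 b1]] /= HR.
apply: le_trans (IH2 _ _ _ (reach_good HR) (le_refl _)) _.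
by apply: reach_sum_cat HR => x y Hx Hy Hxy; exists x, y.
Qed.

(* For e*, the bound is itself closed under one more e (star induction). *)
Lemma estimate_star e : Estimate e -> Estimate (KStar e).
Proof.
move=> IH q al c Hal Hc /=; apply: star_ind_r.
  apply: le_trans Hc _; apply: (@le_ksum _ _ _ _ (q, al)); last exact: le_refl.
  by exists (al, [::]); split => //; exists 0.
rewrite ksum_mulr; apply: ksum_le => [[q1 b1]] /= HR.
apply: le_trans (IH _ _ _ (reach_good HR) (le_refl _)) _.
apply: reach_sum_cat HR => x y [n Hx] Hy Hxy; exists n.+1; apply: gpow_snoc => //.
move=> w Hw; apply: glast_good; exact: GSG_good Hw.
Qed.

Lemma estimate e q al c : c ≦ z q ⊗ at_ al -> c ⊗ keval I J e ≦ reach_sum e q al.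
Proof.
move=> Hc; case: (classic (AtG Gt al)) => Hal; last first.
  rewrite atom_outside_AtG // kmul0r in Hc; rewrite (le0_eq Hc) kmul0l; exact: le0.
move: q al c Hal Hc; elim: e => [p|b|e1 IH1 e2 IH2|e1 IH1 e2 IH2|e1 IH1].
- exact: estimate_act.
- exact: estimate_test.
- exact: estimate_add.
- exact: estimate_mul.
- exact: estimate_star.
Qed.
End MainEstimate.

(* The deterministic automaton of f: states are sets of derivatives of f
   (indices into f :: PD f), the start state is {f}; a set S accepts alpha
   when some derivative in S has alpha as a one-atom string. *)
Section DerivativeAutomaton.
Variables k l : nat.
Variable f : kexp k l.

Definition derivs : seq (kexp k l) := f :: PD f.
Definition der_at (i : 'I_(size derivs)) := nth f derivs i.
Definition dfa_step (S : {set 'I_(size derivs)}) (al : atom l) (p : 'I_k) :=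
  [set j | [exists i in S, der_at j \in Der al p (der_at i)]].
Definition dfa_accept (S : {set 'I_(size derivs)}) (al : atom l) :=
  [exists i in S, Eps al (der_at i)].
Definition dfa_start : {set 'I_(size derivs)} := [set ord0].

Lemma derivs_closed al p g d : g \in derivs -> d \in Der al p g -> d \in derivs.
Proof.
rewrite /derivs !in_cons => /orP [/eqP ->|Hg] Hd; apply/orP; right.
  exact: Der_PD Hd.
exact: PD_closed Hg Hd.
Qed.

Lemma dfa_accepts x : GSG [::] [::] f x -> dfa_accept (run dfa_step dfa_start x) (glast x).
Proof.
suff H s al (S : {set 'I_(size derivs)}) i : i \in S -> GSG [::] [::] (der_at i) (al, s) ->
    dfa_accept (runl dfa_step S al s) (glast ((al, s) : gstring k l)).
  by case: x => al s Hx; apply: (H s al dfa_start ord0); rewrite ?inE.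
elim: s al S i => [|[p b] s IH] al S i Hi Hx.
  by have [H1 _] := Der_cover Hx; apply/existsP; exists i; rewrite Hi /=; apply: H1.
have [_ H2] := Der_cover Hx; have [d Hd Hd'] := H2 p b s (erefl _).
have Hdu : d \in derivs by apply: derivs_closed Hd; rewrite /der_at mem_nth.
have Hj : index d derivs < size derivs by rewrite index_mem.
have Hdj : der_at (Ordinal Hj) = d by rewrite /der_at /= nth_index.
apply: (IH b _ (Ordinal Hj)); last by rewrite Hdj.
by rewrite inE; apply/existsP; exists i; rewrite Hi Hdj.
Qed.

Variable K : KAT.
Variable I : 'I_k -> K.
Variable J : 'I_l -> K.
Hypothesis hJ : forall t, ktest (J t).

Definition dfa_value (S : {set 'I_(size derivs)}) :=
  ksum (fun i => i \in S) (fun i => keval I J (der_at i)).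

Lemma dfa_value_postfix S S' : trans_mx I J dfa_step S S' ⊗ dfa_value S' ≦ dfa_value S.
Proof.
rewrite /trans_mx kmulDr; apply: add_le.
  case: eqP => [->|_]; [rewrite kmul1l; exact: le_refl | rewrite kmul0l; exact: le0].
rewrite ksum_mulr; apply: ksum_le => [[al p]] /= <-.
rewrite /dfa_value ksum_mull; apply: ksum_le => j; rewrite inE => /existsP [i /andP [Hi Hd]].
apply: (@le_ksum _ _ _ _ i) => //; exact: Der_le.
Qed.

Lemma dfa_accept_le S al : dfa_accept S al -> atomk J al ≦ dfa_value S.
Proof.
by move=> /existsP [i /andP [Hi He]]; apply: (@le_ksum _ _ _ _ i) => //; exact: Eps_le.
Qed.

Lemma dfa_value_start : dfa_value dfa_start ≦ keval I J f.
Proof. by apply: ksum_le => i; rewrite inE => /eqP ->; exact: le_refl. Qed.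
End DerivativeAutomaton.

Lemma GSG_incl_le (K : KAT) k l (I : 'I_k -> K) (J : 'I_l -> K)
  (Ga : seq (bexp l * 'I_k * bexp l)) (Gt : seq (bexp l * bexp l)) (e f : kexp k l) :
  (forall t, ktest (J t)) -> Gamma_holds I J Ga Gt ->
  (forall x, GSG Ga Gt e x -> GSG Ga Gt f x) -> keval I J e ≦ keval I J f.
Proof.
move=> hJ HG Hef.
pose Z := mx_star (trans_mx I J (dfa_step (f := f))) (dfa_start f).
have zstep q al p : Z q ⊗ atomk J al ⊗ I p ≦ Z (dfa_step q al p) by exact: mx_star_step.
have Zval S : Z S ⊗ dfa_value I J S ≦ dfa_value I J (dfa_start f).
  exact: (mx_star_postfix (y := dfa_value I J (f := f)) (dfa_value_postfix I hJ)).
rewrite -(kmul1l (keval I J e)); apply: le_trans (mul_ler _ (sum_atoms hJ)) _.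
rewrite ksum_mulr; apply: ksum_le => al _.
have Hstart : atomk J al ≦ Z (dfa_start f) ⊗ atomk J al.
  rewrite -{1}(kmul1l (atomk J al)); apply: mul_ler; exact: mx_star_one.
apply: le_trans (estimate hJ HG zstep e Hstart) _.
apply: ksum_le => [[S b]] /= [x [Hx [_ [<- <-]]]].
have Hacc := dfa_accepts (GSG_forget (Hef _ Hx)).
apply: le_trans (mul_lel _ (dfa_accept_le I hJ Hacc)) _.
apply: (le_trans (Zval _)); exact: dfa_value_start.
Qed.

Theorem proposition6 (k l : nat) (hk : 0 < k) (hl : 0 < l)
  (Ga : seq (bexp l * 'I_k * bexp l)) (Gt : seq (bexp l * bexp l))
  (e1 e2 : kexp k l) :
  KAT_derivable Ga Gt e1 e2 <->
  (forall x : gstring k l, GSG Ga Gt e1 x <-> GSG Ga Gt e2 x).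
Proof.
split; first exact: derivable_GSG_eq.
move=> H K I J hJ HG; apply: le_antisym.
- by apply: GSG_incl_le hJ HG _ => x /H.
- by apply: GSG_incl_le hJ HG _ => x /H.
Qed.
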